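(* Let $\nu\in\mathbb{C}$, $k\in\mathbb{N}$, $\epsilon\in\{\pm1\}$, $E_0=-1/(2\epsilon\nu+2k+1)^2$, and $Y(z)=z^{\epsilon\nu+1/2}e^{-\frac{z}{2\epsilon\nu+2k+1}}\,{}_1F_1\!\left(-k,2\epsilon\nu+1,\frac{2z}{2\epsilon\nu+2k+1}\right)$. If there exists $M\in\mathbb{C}(z,E)$, regular at $E=E_0$, with $M(z,E_0)=-Y'(z)/Y(z)$ and $$H(z,E):=4M^2z^2+4z^2E-4M'z^2-4\nu^2+4z+1=O((E-E_0)^2)\quad(E\to E_0),$$ then $2\epsilon\nu+k\in\mathbb{N}$.
   Context: $'$ denotes $\partial/\partial z$. $H$ is the expression under the square root in the eigenfunction form $\psi=z\left(\frac{M}{\sqrt{-4E}}\mathcal{W}((-4E)^{-1/2},\nu,z\sqrt{-4E})+\mathcal{W}'((-4E)^{-1/2},\nu,z\sqrt{-4E})\right)/\sqrt H$, with $\mathcal W(\mu,\nu,z)$ a solution of $y''+\left(-\frac14+\frac{\mu}{z}+\frac{1/4-\nu^2}{z^2}\right)y=0$. $Y$ solves $4z^2Y''+(4E_0z^2+4z-4\nu^2+1)Y=0$. *)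

(* The complex field is abstracted as an arbitrary
   numClosedFieldType C (C itself is one; the statement is purely algebraic). *)
From HB Require Import structures.
From mathcomp Require Import all_boot all_order all_algebra.
Set Implicit Arguments. Unset Strict Implicit. Unset Printing Implicit Defensive.
Import Order.TTheory GRing.Theory Num.Theory.
Local Open Scope ring_scope.

Section Defs.
Variable C : numClosedFieldType.

Definition fracz (p : {poly C}) : {fraction {poly C}} := FracField.tofrac p.

Definition poch (a : C) (n : nat) : C := \prod_(i < n) (a + i%:R).

(* 1F1(-k, b, x) = sum_{n=0}^k (-k)_n / ((b)_n n!) x^n, a polynomial in x *)
Definition F11negk (k : nat) (b : C) : {poly C} :=
  \poly_(n < k.+1) (poch (- k%:R) n / (poch b n * n`!%:R)).

Definition nden (nu eps : C) (k : nat) : C := 2 * eps * nu + 2 * k%:R + 1.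
Definition E0 (nu eps : C) (k : nat) : C := - 1 / (nden nu eps k) ^+ 2.

Definition Lpoly (nu eps : C) (k : nat) : {poly C} :=
  F11negk k (2 * eps * nu + 1) \Po ((2 / nden nu eps k) *: 'X).

(* Y(z) = z^(eps nu + 1/2) exp(-z/(2 eps nu+2k+1)) L(z);  its logarithmic
   derivative Y'/Y = (eps nu + 1/2)/z - 1/(2 eps nu+2k+1) + L'(z)/L(z),
   an element of C(z). *)
Definition logderY (nu eps : C) (k : nat) : {fraction {poly C}} :=
  fracz (eps * nu + 2^-1)%:P / fracz 'X
  - fracz (1 / nden nu eps k)%:P
  + fracz (Lpoly nu eps k)^`() / fracz (Lpoly nu eps k).

(* Bivariate polynomials C[z,E]: outer variable E, coefficients in C[z].
   A rational function M in C(z,E) is represented as P/Q with P,Q in C[z,E]. *)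
Definition zB : {poly {poly C}} := ('X)%:P.
Definition EB : {poly {poly C}} := 'X.
Definition cB (c : C) : {poly {poly C}} := c%:P%:P.
Definition dz (p : {poly {poly C}}) : {poly {poly C}} := map_poly deriv p.
Definition atE (p : {poly {poly C}}) (e : C) : {poly C} := p.[e%:P].

Definition regular_at (Q : {poly {poly C}}) (e : C) : Prop := atE Q e != 0.

(* For M = P/Q, H = 4 M^2 z^2 + 4 z^2 E - 4 M' z^2 - 4 nu^2 + 4 z + 1
   equals Hnum P Q / Hden Q, using M' = (dz P * Q - P * dz Q)/Q^2. *)
Definition Hnum (nu : C) (P Q : {poly {poly C}}) : {poly {poly C}} :=
  cB 4 * P ^+ 2 * zB ^+ 2
  + (cB 4 * zB ^+ 2 * EB - cB 4 * cB (nu ^+ 2) + cB 4 * zB + 1) * Q ^+ 2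
  - cB 4 * zB ^+ 2 * (dz P * Q - P * dz Q).
Definition Hden (Q : {poly {poly C}}) : {poly {poly C}} := Q ^+ 2.

(* The rational function N/D is O((E-e)^2) as E -> e :
   N/D = (E-e)^2 * (R/S) with R/S in C(z,E) regular at E = e. *)
Definition bigO2_at (N D : {poly {poly C}}) (e : C) : Prop :=
  exists R S : {poly {poly C}}, regular_at S e /\
    N * S = (EB - cB e) ^+ 2 * R * D.

End Defs.

(** Write [M(z,E0) = -Y'/Y] with [Y = z^h e^(-d z) L], where [h = eps nu + 1/2],
    [d = 1/(2 eps nu + 2k + 1)] and [L] is the Laguerre polynomial.  [H = O((E-E0)^2)] says that
    [H] and [dH/dE] vanish at [E0]; the second condition makes [M1 = dM/dE(z,E0)], a rational
    function, satisfy [(Y^2 M1)' = Y^2].  Since [Y^2] is [z^(2h)e^(-2dz)] times a polynomial, the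
    denominator of [M1 L^2] must be a monomial [z^m], and we get a polynomial [A] with
    [z A' + (a - m - c z) A = beta z^(m+1) L^2], where [a = 2 eps nu + 1] and [c = 2 d].
    The functional [p |-> int_0^oo z^(a-m-1) e^(-c z) p(z) dz], defined formally through
    Pochhammer symbols, kills the left-hand side, while on the right it gives
    [beta (a-m)_m c^-(m+1)] times a Laguerre norm that is nonzero unless [(a)_k = 0].
    So [(a-m)_m = 0] or [(a)_k = 0], and either forces [2 eps nu + k] to be a natural number. *)

From HB Require Import structures.
From mathcomp Require Import all_boot all_order all_algebra.
From mathcomp Require Import ring zify.
Set Implicit Arguments. Unset Strict Implicit. Unset Printing Implicit Defensive.
Import Order.TTheory GRing.Theory Num.Theory.
Local Open Scope ring_scope.

Section Pochhammer.
Variable C : numClosedFieldType.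
Implicit Types (x a : C) (i j k m n : nat).

Lemma poch0 x : poch x 0 = 1.
Proof. by rewrite /poch big_ord0. Qed.

Lemma pochS x n : poch x n.+1 = x * poch (x + 1) n.
Proof.
rewrite /poch big_ord_recl /= addr0; congr (_ * _); apply: eq_bigr => i _.
by rewrite /bump /= add1n -natr1; ring.
Qed.

Lemma pochSr x n : poch x n.+1 = poch x n * (x + n%:R).
Proof. by rewrite /poch big_ord_recr. Qed.

Lemma pochD x m n : poch x (m + n) = poch x m * poch (x + m%:R) n.
Proof.
rewrite /poch big_split_ord /=; congr (_ * _); apply: eq_bigr => i _.
by rewrite /= natrD addrA.
Qed.

Lemma pochS_sub x n : poch (x + 1) n.+1 - poch x n.+1 = n.+1%:R * poch (x + 1) n.
Proof. rewrite (pochS x) (pochSr (x + 1)) -natr1; ring. Qed.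

Lemma poch_eq0 x n : (poch x n == 0) = [exists i : 'I_n, x + i%:R == 0].
Proof. by rewrite /poch prodf_seq_eq0; apply/hasP/existsP => [[i _]|[i]]; exists i. Qed.

Lemma poch_eq0_Nnat x n : poch x n = 0 -> exists2 i, (i < n)%N & x = - i%:R.
Proof. by move/eqP; rewrite poch_eq0 => /existsP [i]; rewrite addr_eq0 => /eqP ->; exists i. Qed.

Lemma poch_neq0_leq x m n : (m <= n)%N -> poch x n != 0 -> poch x m != 0.
Proof. by move=> /subnKC <-; rewrite pochD mulf_eq0 negb_or => /andP[]. Qed.

Lemma poch_Nnat k j : poch (- k%:R) j = (-1) ^+ j * 'C(k, j)%:R * j`!%:R :> C.
Proof.
rewrite -mulrA -natrM bin_ffact.
case: (leqP j k) => hj; last first.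
  rewrite ffact_small // mulr0; apply/eqP; rewrite poch_eq0.
  by apply/existsP; exists (Ordinal hj); rewrite /= addrC subrr.
rewrite /poch ffact_prod natr_prod -[X in (-1) ^+ X](card_ord j) -prodrN.
apply: eq_bigr => i _.
rewrite natrB; last by have := ltn_ord i; lia.
by rewrite opprB addrC.
Qed.

Definition poch_fdiff k i a :=
  \sum_(j < k.+1) (-1) ^+ j * 'C(k, j)%:R * poch (a + j%:R) i.

Lemma poch_fdiffS k i a : poch_fdiff k.+1 i a = poch_fdiff k i a - poch_fdiff k i (a + 1).
Proof.
rewrite /poch_fdiff.
set f := fun j : nat => poch (a + j%:R) i.
set tail := \sum_(j < k.+1) (-1) ^+ j.+1 * 'C(k, j.+1)%:R * f j.+1.
have lhsE : \sum_(j < k.+2) (-1) ^+ j * 'C(k.+1, j)%:R * f j =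
    f 0%N + tail - \sum_(j < k.+1) (-1) ^+ j * 'C(k, j)%:R * f j.+1.
  rewrite big_ord_recl /= bin0 expr0 !mul1r -addrA; congr (_ + _).
  rewrite -sumrB; apply: eq_bigr => j _.
  by rewrite /bump /= add1n binS natrD exprS; ring.
have firstE : \sum_(j < k.+1) (-1) ^+ j * 'C(k, j)%:R * f j = f 0%N + tail.
  rewrite big_ord_recl /= bin0 expr0 !mul1r; congr (_ + _).
  rewrite /tail big_ord_recr /= bin_small // mulr0 mul0r addr0.
  by apply: eq_bigr => j _; rewrite /bump /= add1n.
rewrite lhsE firstE; congr (_ - _); apply: eq_bigr => j _.
by rewrite /f -natr1 addrAC addrA.
Qed.

Lemma poch_fdiffE k i a :
  poch_fdiff k i a = (-1) ^+ k * (i ^_ k)%:R * poch (a + k%:R) (i - k).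
Proof.
elim: k i a => [|k IH] i a.
  by rewrite /poch_fdiff big_ord1 /= !bin0 ffactn0 subn0 !expr0 !mul1r.
rewrite poch_fdiffS; case: i => [|i].
  rewrite ffact0n mulr0 mul0r /poch_fdiff.
  by under eq_bigr do rewrite poch0; under [X in _ - X]eq_bigr do rewrite poch0; rewrite subrr.
have -> : poch_fdiff k i.+1 a - poch_fdiff k i.+1 (a + 1) = - (i.+1%:R * poch_fdiff k i (a + 1)).
  rewrite /poch_fdiff mulr_sumr -sumrB -sumrN; apply: eq_bigr => j _.
  rewrite (addrAC a 1) mulrCA -pochS_sub; ring.
rewrite IH ffactSS natrM subSS exprS -[k.+1%:R]natr1 addrAC -addrA; ring.
Qed.

End Pochhammer.

Section WeightedPrimitive.
Variable F : fieldType.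
Implicit Types (b c beta : F) (L A B : {poly F}).

(* [z^b e^(-c z) A/B] is a primitive of [z^b e^(-c z) L^2], with denominators cleared. *)
Definition weighted_primitive b c L A B :=
  'X * (A^`() * B - A * B^`()) + (b%:P - c%:P * 'X) * A * B = 'X * L ^+ 2 * B ^+ 2.

Lemma weighted_primitive_coprime b c L A B : B != 0 -> weighted_primitive b c L A B ->
  exists A1 B1, [/\ B1 != 0, coprimep A1 B1 & weighted_primitive b c L A1 B1].
Proof.
move=> B_neq0 hAB; set g := gcdp A B.
have g_neq0 : g != 0 by rewrite gcdp_eq0 negb_and B_neq0 orbT.
have Ag : A %/ g * g = A := divpK (dvdp_gcdl A B).
have Bg : B %/ g * g = B := divpK (dvdp_gcdr A B).
exists (A %/ g), (B %/ g); split.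
- by apply: contra B_neq0 => /eqP B1_eq0; rewrite -Bg B1_eq0 mul0r.
- by apply: coprimep_div_gcd; rewrite B_neq0 orbT.
move: hAB Ag Bg; rewrite /weighted_primitive.
move: (A %/ g) (B %/ g) => A1 B1 + Ag Bg; rewrite -Ag -Bg !derivM.
move: (A1^`()) (B1^`()) (g^`()) => A1' B1' g' hAB.
have g2_neq0 : g ^+ 2 != 0 by rewrite expf_neq0.
apply: (mulfI g2_neq0); lazymatch type of hAB with ?u = _ =>
  transitivity u; [ring | rewrite hAB; ring] end.
Qed.

Lemma weighted_primitive_dvdp b c L A B : coprimep A B -> weighted_primitive b c L A B ->
  B %| 'X * B^`().
Proof.
move=> coAB hAB; rewrite -(Gauss_dvdpr _ (q := A)) 1?coprimep_sym //.
apply/dvdpP; exists ('X * A^`() + (b%:P - c%:P * 'X) * A - 'X * L ^+ 2 * B).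
move: hAB; rewrite /weighted_primitive => hAB.
lazymatch type of hAB with ?u = _ =>
  transitivity (B * ('X * A^`() + (b%:P - c%:P * 'X) * A) - u); [ring | rewrite hAB; ring] end.
Qed.

Lemma weighted_primitive_monomial b c beta (m : nat) L A : beta != 0 ->
  weighted_primitive b c L A (beta%:P * 'X^m) ->
  'X * A^`() + ((b - m%:R)%:P - c%:P * 'X) * A = beta%:P * ('X^(m.+1) * L ^+ 2).
Proof.
move=> beta_neq0; rewrite /weighted_primitive derivM derivC mul0r add0r => hA.
have XdXn : 'X * ('X^m)^`() = m%:R * 'X^m :> {poly F}.
  by rewrite derivXn; case: m {hA} => [|m]; rewrite ?mulr0n ?mulr0 ?mul0r // mulrnAr -exprS mulr_natl.
move: hA XdXn; move: (('X^m)^`()) => D hA XdXn.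
have monomial_neq0 : beta%:P * 'X^m != 0 :> {poly F}.
  by rewrite mulf_neq0 ?polyC_eq0 // expf_neq0 ?polyX_eq0.
apply: (mulfI monomial_neq0).
lazymatch type of hA with ?u = _ => lazymatch type of XdXn with ?u2 = ?v2 =>
  transitivity (u + beta%:P * A * (u2 - v2));
  [ring | rewrite hA XdXn subrr (exprS 'X m); ring] end end.
Qed.

End WeightedPrimitive.

Lemma dvdp_X_deriv (F : numFieldType) (B : {poly F}) : B != 0 -> B %| 'X * B^`() ->
  exists beta m, beta != 0 /\ B = beta%:P * 'X^m.
Proof.
move=> B_neq0 /dvdpP [t Bt].
have size_t : (size t <= 1)%N.
  have [->|t_neq0] := eqVneq t 0; first by rewrite size_poly0.
  have : (size ('X * B^`())%R <= size B)%N.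
    have [->|dB_neq0] := eqVneq B^`() 0; first by rewrite mulr0 size_poly0.
    by rewrite mulrC size_mulX // lt_size_deriv.
  rewrite Bt size_mul // (polySpred B_neq0) (polySpred t_neq0); lia.
have tC := size1_polyC size_t; set t0 := t`_0 in tC.
have coefB j : (j%:R - t0) * B`_j = 0.
  have := congr1 (fun p : {poly F} => p`_j) Bt; rewrite /= tC coefCM coefXM coef_deriv.
  by case: j => [|j] /= hj; rewrite mulrBl -hj ?mul0r ?mulr_natl ?subrr // subrr.
set d := (size B).-1.
have Bd_neq0 : B`_d != 0 by rewrite -lead_coefE lead_coef_eq0.
have t0E : t0 = d%:R.
  by have /eqP := coefB d; rewrite mulf_eq0 (negbTE Bd_neq0) orbF subr_eq0 => /eqP.
exists B`_d, d; split => //; apply/polyP => j; rewrite coefCM coefXn.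
have [->|jd] := eqVneq j d; first by rewrite mulr1.
have /eqP := coefB j; rewrite mulr0 mulf_eq0 t0E subr_eq0 eqr_nat (negbTE jd) /=.
by move/eqP.
Qed.

Lemma weighted_primitive_poly (F : numFieldType) (b c : F) (L A B : {poly F}) :
  B != 0 -> weighted_primitive b c L A B ->
  exists m A1 beta, beta != 0 /\
    'X * A1^`() + ((b - m%:R)%:P - c%:P * 'X) * A1 = beta%:P * ('X^(m.+1) * L ^+ 2).
Proof.
move=> B_neq0 /(weighted_primitive_coprime B_neq0) [A1 [B1 [B1_neq0 coAB hAB]]].
have [beta [m [beta_neq0 B1E]]] := dvdp_X_deriv B1_neq0 (weighted_primitive_dvdp coAB hAB).
exists m, A1, beta; split => //.
by apply: weighted_primitive_monomial => //; rewrite -B1E.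
Qed.

Section Riccati.
Variable F : numFieldType.
Implicit Types (nu e h d : F) (p q L : {poly F}).

(* [Hnum] and its [E]-derivative at [E = e], in terms of [p = P(e)], [q = Q(e)],
   [p1 = dP/dE(e)] and [q1 = dQ/dE(e)]. *)
Definition riccati_num nu e p q :=
  4%:P * p ^+ 2 * 'X ^+ 2
  + (4%:P * 'X ^+ 2 * e%:P - 4%:P * (nu ^+ 2)%:P + 4%:P * 'X + 1) * q ^+ 2
  - 4%:P * 'X ^+ 2 * (p^`() * q - p * q^`()).

Definition riccati_num_dE nu e p q (p1 q1 : {poly F}) :=
  4%:P * (2%:R * p * p1) * 'X ^+ 2
  + 4%:P * 'X ^+ 2 * q ^+ 2
  + (4%:P * 'X ^+ 2 * e%:P - 4%:P * (nu ^+ 2)%:P + 4%:P * 'X + 1) * (2%:R * q * q1)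
  - 4%:P * 'X ^+ 2 * (p1^`() * q + p^`() * q1 - p1 * q^`() - p * q1^`()).

(* With [M0 = p/q = -Y'/Y] for [Y = z^h e^(-d z) L] and [M1 = (p1 q - p q1)/q^2], the second
   hypothesis is the linearized Riccati equation [M1' = 2 M0 M1 + 1], i.e. [(Y^2 M1)' = Y^2]. *)
Lemma riccati_linearization nu e h d p q (p1 q1 : {poly F}) L :
  riccati_num nu e p q = 0 -> riccati_num_dE nu e p q p1 q1 = 0 ->
  p * ('X * L) = - q * (h%:P * L - d%:P * 'X * L + 'X * L^`()) ->
  weighted_primitive (2 * h) (2 * d) L ((p1 * q - p * q1) * L ^+ 2) (q ^+ 2).
Proof.
move=> H0 H1 pqL; apply/eqP; rewrite -subr_eq0; apply/eqP.
have X4_neq0 : 4%:P * 'X ^+ 2 != 0 :> {poly F}.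
  by rewrite mulf_neq0 ?expf_neq0 ?polyX_eq0 // polyC_eq0 pnatr_eq0.
apply: (mulfI X4_neq0); rewrite mulr0.
move: H0 H1 pqL; rewrite /riccati_num /riccati_num_dE !polyCM.
rewrite !expr2 !(derivM, derivB, derivD, derivN, derivC, derivX).
move: (p^`()) (q^`()) (p1^`()) (q1^`()) (L^`()) => p' q' p1' q1' L' H0 H1 pqL.
lazymatch type of H0 with ?a = 0 => lazymatch type of H1 with ?b = 0 =>
lazymatch type of pqL with ?c = ?c' =>
  transitivity (- ('X * q * L * L) * (b * q - 2%:R * q1 * a)
    + 8%:R * 'X * 'X * q * L * (p1 * q - p * q1) * (c - c'));
  [ring | rewrite H0 H1 pqL subrr; ring] end end end.
Qed.

End Riccati.

Section Bivariate.
Variable C : numClosedFieldType.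
Implicit Types (P Q : {poly {poly C}}) (e : C).

Lemma coef_dz P i : (dz P)`_i = (P`_i)^`().
Proof. by rewrite /dz coef_map_id0 // deriv0. Qed.

Lemma atE_dz P e : atE (dz P) e = (atE P e)^`().
Proof.
rewrite /atE (horner_coef_wide _ (size_poly _ _ : (size (dz P) <= size P)%N)).
rewrite horner_coef raddf_sum; apply: eq_bigr => i _.
by rewrite coef_dz /= -rmorphXn derivM derivC mulr0 addr0.
Qed.

Lemma deriv_dz P : (dz P)^`() = dz P^`().
Proof. by apply/polyP => i; rewrite coef_deriv !coef_dz coef_deriv derivMn. Qed.

Lemma atE_Hnum nu P Q e : atE (Hnum nu P Q) e = riccati_num nu e (atE P e) (atE Q e).
Proof.
rewrite /Hnum /riccati_num /cB /zB /EB.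
rewrite /atE !(hornerD, hornerN, hornerM, hornerC, hornerX, horner_exp) -!/(atE _ e) !atE_dz.
by rewrite /atE; ring.
Qed.

Lemma atE_deriv_Hnum nu P Q e : atE (Hnum nu P Q)^`() e =
  riccati_num_dE nu e (atE P e) (atE Q e) (atE P^`() e) (atE Q^`() e).
Proof.
rewrite /Hnum /riccati_num_dE /cB /zB /EB !derivE !deriv_dz !(mulr0, mul0r, mulr1, addr0, subr0).
rewrite /atE !(hornerD, hornerN, hornerM, hornerC, hornerX, horner_exp) -!/(atE _ e) !atE_dz.
by rewrite /atE; ring.
Qed.

Lemma bigO2_atE N D e : bigO2_at N D e -> atE N e = 0 /\ atE N^`() e = 0.
Proof.
case=> R [S [S_neq0 NSE]]; rewrite /regular_at in S_neq0.
have : atE (EB C - cB e) e = 0 by rewrite /atE hornerD hornerN hornerX hornerC subrr.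
move: (EB C - cB e) NSE => t NSE t0.
have N0 : atE N e = 0.
  have /eqP := congr1 (fun P => atE P e) NSE; rewrite /atE !hornerM -!/(atE _ e) t0.
  by rewrite !mul0r mulf_eq0 (negbTE S_neq0) orbF => /eqP.
split=> //; have /eqP := congr1 (fun P => atE P^`() e) NSE.
rewrite expr2 !derivM /atE !(hornerD, hornerM) -!/(atE _ e) N0 t0.
by rewrite !(mul0r, mulr0, add0r, addr0) mulf_eq0 (negbTE S_neq0) orbF => /eqP.
Qed.

End Bivariate.

Lemma coef_comp_scaleX (R : comNzRingType) (p : {poly R}) (c : R) j :
  (p \Po (c *: 'X))`_j = p`_j * c ^+ j.
Proof.
rewrite comp_polyE; under eq_bigr do rewrite exprZn scalerA.
rewrite coef_sumMXn /= (big_ord1_eq _ (fun i => p`_i * c ^+ i)).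
by case: ltnP => // /leq_sizeP ->; rewrite ?mul0r.
Qed.

Section GammaFunctional.
Variable C : numClosedFieldType.
Implicit Types (b c : C) (A L p : {poly C}).

Definition gamma_moment b c i := poch b i / c ^+ i.

(* For [N > size p], [c^b/Gamma(b)] times the integral of [z^(b-1) e^(-c z) p(z)] over [(0, oo)]. *)
Definition gamma_int N b c p := \sum_(i < N) p`_i * gamma_moment b c i.

Lemma gamma_momentS b c i : c != 0 ->
  (b + i%:R) * gamma_moment b c i = c * gamma_moment b c i.+1.
Proof.
move=> c_neq0; rewrite /gamma_moment pochSr exprS.
by field; rewrite expf_neq0 ?c_neq0.
Qed.

(* Integration by parts: [z^(b-1) e^(-c z)] times the argument is [(z^b e^(-c z) A)']. *)
Lemma gamma_int_weighted_deriv N b c A : c != 0 -> (size A < N)%N ->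
  gamma_int N b c ('X * A^`() + (b%:P - c%:P * 'X) * A) = 0.
Proof.
move=> c_neq0 sizeA.
pose f j := if j is j'.+1 then c * A`_j' * gamma_moment b c j'.+1 else 0.
have -> : gamma_int N b c ('X * A^`() + (b%:P - c%:P * 'X) * A) =
    \sum_(i < N) (f i.+1 - f i).
  apply: eq_bigr => i _.
  rewrite coefD mulrBl coefB coefCM -mulrA coefCM !coefXM coef_deriv.
  case: (nat_of_ord i) => [|j] /=.
    by rewrite /gamma_moment poch0 expr0 divr1 pochSr poch0 expr1 addr0; field.
  rewrite [c * A`_j.+1 * _]mulrAC -gamma_momentS // -mulr_natr; ring.
rewrite -(big_mkord xpredT (fun i => f i.+1 - f i)) telescope_sumr //.
by case: N sizeA => [//|N] sizeA /=; rewrite nth_default ?mulr0 ?mul0r ?subr0.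
Qed.

Lemma gamma_int_sum N b c I (r : seq I) (F : I -> {poly C}) :
  gamma_int N b c (\sum_(i <- r) F i) = \sum_(i <- r) gamma_int N b c (F i).
Proof.
rewrite /gamma_int; under eq_bigr do rewrite coef_sum mulr_suml.
exact: exchange_big.
Qed.

Lemma gamma_intZ N b c x p : gamma_int N b c (x *: p) = x * gamma_int N b c p.
Proof. by rewrite /gamma_int mulr_sumr; apply: eq_bigr => i _; rewrite coefZ mulrA. Qed.

Lemma gamma_intXn N b c t : (t < N)%N -> gamma_int N b c 'X^t = gamma_moment b c t.
Proof.
move=> tN; rewrite /gamma_int (bigD1 (Ordinal tN)) //= coefXn eqxx mul1r big1 ?addr0 //.
by move=> i /negbTE; rewrite coefXn -val_eqE /= => ->; rewrite mul0r.
Qed.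

Lemma poly_wide K p : (size p <= K)%N -> p = \sum_(i < K) p`_i *: 'X^i.
Proof.
move=> sizep; rewrite -poly_def; apply/polyP => i; rewrite coef_poly.
by case: ltnP => // /(leq_trans sizep) /leq_sizeP ->.
Qed.

Lemma gamma_int_XnL2 N b c K s L : (size L <= K)%N -> (s + K + K <= N)%N ->
  gamma_int N b c ('X^s * L ^+ 2) =
  \sum_(l < K) \sum_(j < K) L`_l * L`_j * gamma_moment b c (s + l + j).
Proof.
move=> sizeL sKN.
have -> : 'X^s * L ^+ 2 = \sum_(l < K) \sum_(j < K) (L`_l * L`_j) *: 'X^(s + l + j).
  rewrite expr2 {1 2}(poly_wide sizeL) mulr_suml mulr_sumr; apply: eq_bigr => l _.
  rewrite !mulr_sumr; apply: eq_bigr => j _.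
  by rewrite -!mul_polyC polyCM !exprD; ring.
rewrite gamma_int_sum; apply: eq_bigr => l _; rewrite gamma_int_sum; apply: eq_bigr => j _.
by rewrite gamma_intZ gamma_intXn //; have := ltn_ord l; have := ltn_ord j; lia.
Qed.

End GammaFunctional.

Section LaguerreNorm.
Variable C : numClosedFieldType.
Implicit Types (a b c : C) (k m : nat).

Definition lag_coef k a c j := poch (- k%:R) j / (poch a j * j`!%:R) * c ^+ j.

Definition lag_norm k a :=
  \sum_(l < k.+1) poch (- k%:R) l / (poch a l * l`!%:R) * poch_fdiff k l.+1 a.

Lemma fact_neq0 j : j`!%:R != 0 :> C.
Proof. by rewrite pnatr_eq0 -lt0n fact_gt0. Qed.

Lemma gamma_moment_lag_sq k m a b c : b + m%:R = a -> c != 0 -> poch a k != 0 ->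
  \sum_(l < k.+1) \sum_(j < k.+1)
     lag_coef k a c l * lag_coef k a c j * gamma_moment b c (m.+1 + l + j)
  = poch b m / c ^+ m.+1 * lag_norm k a.
Proof.
move=> abm c_neq0 pa_neq0.
have cX_neq0 n : c ^+ n != 0 by rewrite expf_neq0.
have pa_le j : (j < k.+1)%N -> poch a j != 0 by move=> jk; apply: poch_neq0_leq pa_neq0.
rewrite /lag_norm mulr_sumr; apply: eq_bigr => l _.
have inner : \sum_(j < k.+1) lag_coef k a c j * gamma_moment b c (m.+1 + l + j) =
    poch b m / c ^+ m.+1 / c ^+ l * poch_fdiff k l.+1 a.
  rewrite /poch_fdiff mulr_sumr; apply: eq_bigr => j _.
  rewrite /gamma_moment /lag_coef (_ : (m.+1 + l + j = m + (j + l.+1))%N); last by lia.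
  rewrite pochD abm pochD poch_Nnat !exprD !exprS.
  have := cX_neq0 m; have := cX_neq0 l; have := cX_neq0 j; have := pa_le j (ltn_ord j).
  move: (c ^+ m) (c ^+ l) (c ^+ j) => cm cl cj paj cj_neq0 cl_neq0 cm_neq0.
  by field; rewrite paj cj_neq0 cl_neq0 cm_neq0 c_neq0 fact_neq0.
under eq_bigr do rewrite -mulrA; rewrite -mulr_sumr inner /lag_coef exprS.
have := cX_neq0 m; have := cX_neq0 l; have := pa_le l (ltn_ord l).
move: (c ^+ m) (c ^+ l) => cm cl pal cl_neq0 cm_neq0.
by field; rewrite pal cl_neq0 cm_neq0 c_neq0 fact_neq0.
Qed.

(* Only the terms [l = k - 1] and [l = k] survive, since [poch_fdiff k l.+1 a = 0] for [l.+1 < k]. *)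
Lemma lag_norm_neq0 k a : poch a k != 0 -> a + 2 * k%:R != 0 -> lag_norm k a != 0.
Proof.
rewrite /lag_norm; case: k => [|k] pa_neq0 a2k_neq0.
  rewrite big_ord1 /= poch_fdiffE !poch0 ffactn0 subn0 addr0 pochSr poch0 expr0 addr0 !mul1r.
  by rewrite mulf_neq0 // ?invr_neq0 ?fact_neq0 //; move: a2k_neq0; rewrite mulr0 addr0.
rewrite big_ord_recr big_ord_recr /= big1 => [|l _]; last first.
  rewrite poch_fdiffE ffact_small ?(mulr0, mul0r) //; have := ltn_ord l; lia.
rewrite add0r !poch_fdiffE subnn subSnn ffactnn ffactSS.
have -> : (k.+1 ^_ k = k.+1`!)%N by rewrite -(ffact_fact (leqnSn k)) subSnn muln1.
rewrite !poch_Nnat binSn binn !poch0 (pochSr (a + k.+1%:R)) poch0 mul1r addr0.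
have pak_neq0 : poch a k != 0 by apply: poch_neq0_leq pa_neq0.
have ak_neq0 : a + k%:R != 0 by move: pa_neq0; rewrite pochSr mulf_eq0 negb_or => /andP [].
rewrite (pochSr a k) factS natrM.
rewrite -[(-1) ^+ k]signr_odd !exprS -[(-1) ^+ k]signr_odd.
move: a2k_neq0; rewrite (_ : a + 2 * k.+1%:R = a + k%:R + k.+2%:R); last by rewrite -!natr1; ring.
move=> a2k_neq0.
set V := (k.+1%:R * k`!%:R) * (a + k%:R + k.+2%:R) / (poch a k * (a + k%:R)).
have V_neq0 : V != 0 by rewrite !mulf_neq0 ?fact_neq0 ?pnatr_eq0 // invr_neq0 // mulf_neq0.
have k2E : k.+2%:R = k.+1%:R + 1 :> C by rewrite -natr1.
have k1_neq0 : 1 + k%:R != 0 :> C by rewrite addrC natr1 pnatr_eq0.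
case: (odd k); rewrite /= ?expr1 ?expr0 !natrM;
match goal with |- is_true (negb (?e == _)) =>
  have -> : e = V by rewrite /V k2E; field; rewrite ak_neq0 pak_neq0 fact_neq0 k1_neq0 end.
all: exact: V_neq0.
Qed.

End LaguerreNorm.

Lemma clear_logder (F : fieldType) (p q x l h d l' : F) : q != 0 -> x != 0 -> l != 0 ->
  p / q = - (h / x - d + l' / l) -> p * (x * l) = - q * (h * l - d * x * l + x * l').
Proof. by move=> q_neq0 x_neq0 l_neq0 pq; rewrite -[p](divfK q_neq0) pq; field; rewrite x_neq0 l_neq0. Qed.

Section Laguerre.
Variables (C : numClosedFieldType) (nu eps : C) (k : nat).
Local Notation L := (Lpoly nu eps k).
Local Notation a := (2 * eps * nu + 1).
Local Notation c := (2 / nden nu eps k).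

Lemma coef_Lpoly j : (j <= k)%N -> L`_j = lag_coef k a c j.
Proof. by move=> jk; rewrite /Lpoly coef_comp_scaleX coef_poly ltnS jk. Qed.

Lemma size_Lpoly : (size L <= k.+1)%N.
Proof.
by apply/leq_sizeP => j jk; rewrite /Lpoly coef_comp_scaleX coef_poly ltnNge jk mul0r.
Qed.

Lemma Lpoly_neq0 : L != 0.
Proof.
apply/eqP => /(congr1 (fun p : {poly C} => p`_0)) /eqP.
by rewrite coef_Lpoly // coef0 /lag_coef !poch0 expr0 !mulr1 mul1r invr_eq0 oner_eq0.
Qed.

Lemma logderY_eq (p q : {poly C}) : q != 0 -> fracz p / fracz q = - logderY nu eps k ->
  p * ('X * L) = - q * ((eps * nu + 2^-1)%:P * L - (1 / nden nu eps k)%:P * 'X * L + 'X * L^`()).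
Proof.
rewrite /logderY => q_neq0; have := Lpoly_neq0.
move: L ((eps * nu + 2^-1)%:P) ((1 / nden nu eps k)%:P) => L' h d L_neq0 pq.
apply/eqP; rewrite -tofrac_eq; apply/eqP.
rewrite !(rmorphM, rmorphN, rmorphB, rmorphD); apply: clear_logder pq.
- by rewrite tofrac_eq0.
- by rewrite tofrac_eq0 polyX_eq0.
- by rewrite tofrac_eq0.
Qed.

End Laguerre.

Lemma Lpoly_weighted_primitive (C : numClosedFieldType) (nu eps : C) k (P Q : {poly {poly C}}) :
  regular_at Q (E0 nu eps k) ->
  fracz (atE P (E0 nu eps k)) / fracz (atE Q (E0 nu eps k)) = - logderY nu eps k ->
  bigO2_at (Hnum nu P Q) (Hden Q) (E0 nu eps k) ->
  exists m A beta, beta != 0 /\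
    'X * A^`() + ((2 * eps * nu + 1 - m%:R)%:P - (2 / nden nu eps k)%:P * 'X) * A
    = beta%:P * ('X^(m.+1) * Lpoly nu eps k ^+ 2).
Proof.
rewrite /regular_at => + + /bigO2_atE []; rewrite atE_Hnum atE_deriv_Hnum.
move: (E0 nu eps k) => e; move: (atE P e) (atE Q e) (atE P^`() e) (atE Q^`() e).
move=> p q p1 q1 q_neq0 pq H0 H1.
have := riccati_linearization H0 H1 (logderY_eq q_neq0 pq).
move=> /(weighted_primitive_poly (expf_neq0 2 q_neq0)) [m [A [beta [beta_neq0 hA]]]].
exists m, A, beta; split=> //; move: hA.
have -> : 2 * (eps * nu + 2^-1) = 2 * eps * nu + 1 by rewrite mulrDr mulrA divff ?pnatr_eq0.
by rewrite mul1r.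
Qed.

(* Apply the Gamma functional to both sides: the left one is an exact derivative. *)
Lemma laguerre_primitive_poch_eq0 (C : numClosedFieldType) (a c beta : C) k m (A L : {poly C}) :
  c != 0 -> beta != 0 -> poch a k != 0 -> a + 2 * k%:R != 0 ->
  (size L <= k.+1)%N -> (forall j, (j <= k)%N -> L`_j = lag_coef k a c j) ->
  'X * A^`() + ((a - m%:R)%:P - c%:P * 'X) * A = beta%:P * ('X^(m.+1) * L ^+ 2) ->
  poch (a - m%:R) m = 0.
Proof.
move=> c_neq0 beta_neq0 pa_neq0 a2k_neq0 sizeL coefL hA.
pose N := (size A + m.+1 + k.+1 + k.+1)%N.
have sizeA : (size A < N)%N by rewrite /N; lia.
have /eqP := gamma_int_weighted_deriv (a - m%:R) c_neq0 sizeA.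
rewrite hA mul_polyC gamma_intZ (gamma_int_XnL2 _ _ sizeL); last by rewrite /N; lia.
have coefL2 (l j : 'I_k.+1) : L`_l * L`_j = lag_coef k a c l * lag_coef k a c j.
  by rewrite !coefL ?(ltn_ord l : (l <= k)%N) ?(ltn_ord j : (j <= k)%N).
under eq_bigr => l _ do under eq_bigr => j _ do rewrite coefL2.
rewrite gamma_moment_lag_sq ?subrK // !mulf_eq0 invr_eq0 expf_eq0 (negbTE c_neq0) andbF.
by rewrite (negbTE beta_neq0) (negbTE (lag_norm_neq0 pa_neq0 a2k_neq0)) !orbF => /eqP.
Qed.

Theorem mainTheorem14 (C : numClosedFieldType) (nu eps : C) (k : nat) :
  (eps = 1 \/ eps = -1) ->
  nden nu eps k != 0 ->
  (exists P Q : {poly {poly C}},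
      regular_at Q (E0 nu eps k) /\
      fracz (atE P (E0 nu eps k)) / fracz (atE Q (E0 nu eps k)) = - logderY nu eps k /\
      bigO2_at (Hnum nu P Q) (Hden Q) (E0 nu eps k)) ->
  exists n : nat, 2 * eps * nu + k%:R = n%:R.
Proof.
move=> _ nden_neq0 [P [Q [Q_reg [PQ HO2]]]].
have [m [A [beta [beta_neq0 hA]]]] := Lpoly_weighted_primitive Q_reg PQ HO2.
set a := 2 * eps * nu + 1 in hA *.
have nat_witness j i : (i < j + k)%N -> a = j%:R - i%:R ->
    exists n : nat, 2 * eps * nu + k%:R = n%:R.
  move=> ijk aE; exists (j + k - i.+1)%N.
  have -> : 2 * eps * nu = j%:R - i%:R - 1 by rewrite -aE addrK.
  by rewrite natrB // natrD -natr1; ring.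
have [pa0|pa_neq0] := eqVneq (poch a k) 0.
  by have [i ik aE] := poch_eq0_Nnat pa0; apply: (nat_witness 0%N i); rewrite ?sub0r.
have a2k_neq0 : a + 2 * k%:R != 0 by rewrite /a addrAC.
have c_neq0 : 2 / nden nu eps k != 0 by rewrite mulf_neq0 ?invr_eq0 ?pnatr_eq0.
have [i im aE] := poch_eq0_Nnat (laguerre_primitive_poch_eq0 c_neq0 beta_neq0 pa_neq0
  a2k_neq0 (size_Lpoly nu eps k) (@coef_Lpoly C nu eps k) hA).
apply: (nat_witness m i); first by rewrite ltn_addr.
by rewrite -[a](subrK m%:R) aE addrC.
Qed.
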